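(* Let $L:\mathbb{R}^k\to\mathbb{R}^m$ be linear. If $t(L)>\frac{15}{16}2^{k-1}$ and $t(L)\neq 2^{k-1}$, then $L(e_i)\in\{-1,0,1\}^m$ for every $i\in[k]$.
   Context: $\mathbb{H}^n=\{0,1\}^n$, $e_1,\dots,e_k$ is the standard basis of $\mathbb{R}^k$, and $t(L)=|L^{-1}(\mathbb{H}^m)\cap\mathbb{H}^k|$. *)

From HB Require Import structures.
From mathcomp Require Import all_boot all_order all_algebra.
From mathcomp Require Import reals.
Set Implicit Arguments. Unset Strict Implicit. Unset Printing Implicit Defensive.
Import Order.TTheory GRing.Theory Num.Theory.
Local Open Scope ring_scope.

Definition cube_vec (R : realType) (k : nat) (x : {ffun 'I_k -> bool}) : 'cV[R]_k :=
  \col_i (x i)%:R.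

Definition in_cube (R : realType) (m : nat) (v : 'cV[R]_m) : bool :=
  [forall j, (v j 0 == 0) || (v j 0 == 1)].

Definition tL (R : realType) (k m : nat) (L : {linear 'cV[R]_k -> 'cV[R]_m}) : nat :=
  #|[set x : {ffun 'I_k -> bool} | in_cube (L (cube_vec R x))]|.

Definition std_basis (R : realType) (k : nat) (i : 'I_k) : 'cV[R]_k := delta_mx i 0.

(* Write a(d,j) for the j-th coordinate of L e_d and suppose that c = a(i,j0) is not in
   {-1,0,1}.  Flipping bit i changes L(x)_j0 by +-c, so x and its flip are never both in
   T = L^-1(H^m) ∩ H^k, and the union Y of T with its flip has 2 t(L) points.  If Y is the
   whole cube then t(L) = 2^(k-1).  Otherwise it suffices to find at most four coordinates
   D such that every subcube obtained by freeing the coordinates in D meets the complement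
   of Y: averaging over these subcubes gives |Y| <= (15/16) 2^k.  If four coordinates d <> i
   have a(d,j0) <> 0, take them: along a monotone path through them L(y)_j0 - y_i c takes
   five values, but it takes only four values on Y.  If two coordinates outside the support
   of row j0 lie in the support of some row j, take them: L(y)_j cannot lie in {0,1} at the
   four corners of a square.  Otherwise take a point x0 outside Y, witnessed by the rows j0
   and j, and let D be the union of the supports of these two rows, minus i. *)

From HB Require Import structures.
From mathcomp Require Import all_boot all_order all_algebra.
From mathcomp Require Import reals.
From mathcomp Require Import zify lra.
Set Implicit Arguments. Unset Strict Implicit. Unset Printing Implicit Defensive.
Import Order.TTheory GRing.Theory Num.Theory.
Local Open Scope ring_scope.

Lemma increasing_chain_size (disp : Order.disp_t) (T : porderType disp)
    (h : nat -> T) (n : nat) (r : seq T) :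
  (forall l, (l < n)%N -> (h l < h l.+1)%O) -> (forall l, (l <= n)%N -> h l \in r) ->
  (n < size r)%N.
Proof.
move=> h_incr h_r; set D := iota 0 n.+1.
have h_inj : {in D &, injective h}.
  apply/inc_inj_in/Order.NatMonotonyTheory.incn_inP => [a b _|l _].
    rewrite mem_iota => b_lt c /andP[_ cb]; rewrite mem_iota; exact: ltn_trans cb b_lt.
  by rewrite mem_iota /= ltnS; exact: h_incr.
rewrite -[n.+1](size_iota 0) -(size_map h).
apply: uniq_leq_size; first by rewrite map_inj_in_uniq ?iota_uniq.
by move=> _ /mapP[l + ->]; rewrite mem_iota; exact: h_r.
Qed.

Definition is01 (R : numDomainType) (v : R) : bool := (v == 0) || (v == 1).

Lemma is01_addr (R : realDomainType) (v c : R) :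
  is01 v -> is01 (v + c) -> [|| c == -1, c == 0 | c == 1].
Proof.
rewrite /is01 => /orP[]/eqP-> /orP[]/eqP h; apply/or3P;
  [constructor 2 | constructor 3 | constructor 1 | constructor 2]; apply/eqP; lra.
Qed.

Lemma is01_square (R : realDomainType) (v a b : R) : a != 0 -> b != 0 ->
  ~~ [&& is01 v, is01 (v + a), is01 (v + b) & is01 (v + a + b)].
Proof.
move=> /lt_total/orP ha /lt_total/orP hb; rewrite /is01.
apply/negP => /and4P[] /orP[]/eqP e1 /orP[]/eqP e2 /orP[]/eqP e3 /orP[]/eqP e4;
  case: ha => ha; case: hb => hb; lra.
Qed.

Section Cube.
Variable I : finType.
Local Notation cube := {ffun I -> bool}.

Definition flip (x : cube) (d : I) : cube := [ffun l => (l == d) (+) x l].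

Lemma flip_self x d : flip x d d = ~~ x d.
Proof. by rewrite ffunE eqxx. Qed.

Lemma flip_other x d l : l != d -> flip x d l = x l.
Proof. by rewrite ffunE => /negPf->. Qed.

Lemma flipK d : involutive (flip^~ d).
Proof. by move=> x; apply/ffunP => l; rewrite !ffunE addKb. Qed.

Definition hits_all_subcubes (D : {set I}) (N : {set cube}) : Prop :=
  forall x : cube, exists2 y : cube, {in ~: D, y =1 x} & y \in N.

Lemma hits_all_subcubesU1 (D : {set I}) (N : {set cube}) (i : I) :
  (forall y, (flip y i \in N) = (y \in N)) ->
  hits_all_subcubes (i |: D) N -> hits_all_subcubes D N.
Proof.
move=> flipN hitN x; have [y yx yN] := hitN x.
have yx_off_i l : l \in ~: D -> l != i -> y l = x l.
  by move=> lD li; apply: yx; rewrite !inE negb_or li -in_setC lD.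
have [yxi|yxi] := eqVneq (y i) (x i).
  by exists y => // l lD; have [->|] := eqVneq l i; last exact: yx_off_i.
exists (flip y i); last by rewrite flipN.
move=> l lD; have [->|li] := eqVneq l i; last by rewrite flip_other ?yx_off_i.
by rewrite flip_self; move: yxi; case: (y i); case: (x i).
Qed.

Lemma card_cube_hits (D : {set I}) (N : {set cube}) :
  hits_all_subcubes D N -> (2 ^ #|I| <= #|N| * 2 ^ #|D|)%N.
Proof.
move=> /fin_all_exists2[y yx yN].
(* x is determined by the point y x of N and by its trace on D *)
pose F x := (y x, [set l in D | x l]).
have F_inj : injective F.
  move=> x1 x2 [e12 /setP e12D]; apply/ffunP => l.
  have [lD|lD] := boolP (l \in D); first by move: (e12D l); rewrite !inE lD.
  by rewrite -yx ?inE // e12 yx ?inE.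
have -> : (2 ^ #|I| = #|F @: setT|)%N by rewrite card_imset // cardsT card_ffun card_bool.
rewrite -card_powerset -cardsX.
apply/subset_leq_card/subsetP => _ /imsetP[x _ ->].
by rewrite inE /= yN powersetE; apply/subsetP => l; rewrite inE => /andP[].
Qed.

End Cube.

Section WeightedSum.
Variables (R : pzRingType) (I : finType) (w : I -> R).
Local Notation cube := {ffun I -> bool}.

Definition wsum (x : cube) : R := \sum_l (x l)%:R * w l.

Lemma wsum_flip x d : wsum (flip x d) = wsum x + (if x d then - w d else w d).
Proof.
rewrite /wsum (bigD1 d) //= [in RHS](bigD1 d) //= flip_self.
rewrite (eq_bigr (fun l => (x l)%:R * w l)) => [|l ld]; last by rewrite flip_other.
by case: (x d); rewrite /= mul1r mul0r add0r; [rewrite addrAC subrr add0r | rewrite addrC].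
Qed.

Lemma eq_wsum (x y : cube) : {in [pred d | w d != 0], x =1 y} -> wsum x = wsum y.
Proof.
move=> xy; apply: eq_bigr => d _.
by have [->|/xy->] := eqVneq (w d) 0; rewrite ?mulr0.
Qed.

End WeightedSum.

Lemma wsum_chain (R : realDomainType) (I : finType) (w : I -> R) (s : seq I)
    (x : {ffun I -> bool}) : uniq s -> {in s, forall d, w d != 0} ->
  exists p : nat -> {ffun I -> bool},
    (forall n, {in [predC s], p n =1 x}) /\
    (forall n, (n < size s)%N -> wsum w (p n) < wsum w (p n.+1)).
Proof.
move=> s_uniq w_s.
(* p n gives the first n coordinates of s the sign of their weight, the others the
   opposite sign *)
pose p n : {ffun I -> bool} :=
  [ffun l => if l \in s then (index l s < n)%N == (0 < w l) else x l].
exists p; split.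
  by move=> n l; rewrite inE ffunE => /negPf->.
move=> n ns; have d0 : I by move: ns; clear -s; case: s.
set d := nth d0 s n; have ds : d \in s by rewrite mem_nth.
have p_step : p n.+1 = flip (p n) d.
  apply/ffunP => l; rewrite !ffunE; have [->|ld] /= := eqVneq l d.
    by rewrite ds index_uniq // ltnSn ltnn; case: (0 < _).
  case: ifP => // ls; rewrite ltnS leq_eqVlt.
  by have /negPf-> : index l s != n by apply: contra_neq ld; rewrite /d => <-; rewrite nth_index.
rewrite p_step wsum_flip ffunE ds index_uniq // ltnn /=.
by have /lt_total/orP[wd_neg|wd_pos] := w_s d ds;
  [rewrite (lt_gtF wd_neg) /= ltrDl oppr_gt0 | rewrite wd_pos /= ltrDl].
Qed.

Section LinearPreimage.
Variables (R : realType) (k m : nat) (L : {linear 'cV[R]_k -> 'cV[R]_m}).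
Local Notation cube := {ffun 'I_k -> bool}.

Definition coef (d : 'I_k) (j : 'I_m) : R := L (std_basis R d) j 0.
Local Notation row j := (wsum (coef^~ j)).

Definition support (j : 'I_m) : {set 'I_k} := [set d | coef d j != 0].

Definition preim : {set cube} := [set x | in_cube (L (cube_vec R x))].

Lemma L_cube_vec x j : L (cube_vec R x) j 0 = row j x.
Proof.
have -> : cube_vec R x = \sum_d (x d)%:R *: std_basis R d.
  apply/matrixP => a b; rewrite /cube_vec mxE summxE (bigD1 a) //= big1.
    by rewrite !mxE ord1 !eqxx mulr1 addr0.
  by move=> d /negPf nd; rewrite !mxE eq_sym nd mulr0.
by rewrite linear_sum summxE; apply: eq_bigr => d _; rewrite linearZ mxE.
Qed.

Lemma mem_preim x : (x \in preim) = [forall j, is01 (row j x)].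
Proof. by rewrite inE; apply: eq_forallb => j; rewrite L_cube_vec. Qed.

Lemma preim_is01 j x : x \in preim -> is01 (row j x).
Proof. by rewrite mem_preim => /forallP. Qed.

Lemma notin_preim x : x \notin preim -> exists j, ~~ is01 (row j x).
Proof. by rewrite mem_preim => /forallPn. Qed.

Variables (i : 'I_k) (j0 : 'I_m).

Definition flip_hull : {set cube} := [set x | (x \in preim) || (flip x i \in preim)].

Lemma mem_flip_hull x : (x \in flip_hull) = (x \in preim) || (flip x i \in preim).
Proof. by rewrite inE. Qed.

Lemma mem_flip_hull_flip x : (flip x i \in flip_hull) = (x \in flip_hull).
Proof. by rewrite !mem_flip_hull flipK orbC. Qed.

Definition row_off_i (x : cube) : R := wsum (fun d => if d == i then 0 else coef d j0) x.

Lemma row_split x : row j0 x = row_off_i x + (x i)%:R * coef i j0.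
Proof.
rewrite /row_off_i /wsum (bigD1 i) //= [X in _ = X + _](bigD1 i) //= eqxx mulr0 add0r.
by rewrite addrC; congr (_ + _); apply: eq_bigr => d /negPf->.
Qed.

Lemma row_off_i_flip x : row_off_i (flip x i) = row_off_i x.
Proof. by rewrite /row_off_i wsum_flip eqxx oppr0; case: (x i); rewrite addr0. Qed.

Lemma row_off_i_hull x : x \in flip_hull ->
  row_off_i x \in [:: 0; 1; - coef i j0; 1 - coef i j0].
Proof.
have in_preim z : z \in preim -> row_off_i z \in [:: 0; 1; - coef i j0; 1 - coef i j0].
  move=> /(preim_is01 j0); rewrite row_split => /orP[]/eqP z01;
  rewrite -[row_off_i z](addrK ((z i)%:R * coef i j0)) z01;
  by case: (z i); rewrite /= ?mul1r ?mul0r ?subr0 ?sub0r !inE eqxx ?orbT.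
by rewrite mem_flip_hull => /orP[/in_preim // | /in_preim]; rewrite row_off_i_flip.
Qed.

Lemma card_flip_hull_le (D : {set 'I_k}) : (#|D| <= 4)%N ->
  hits_all_subcubes D (~: flip_hull) -> (16 * #|flip_hull| <= 15 * 2 ^ k)%N.
Proof.
move=> D_small /card_cube_hits; rewrite card_ord => hits.
have card_cube : (#|flip_hull| + #|~: flip_hull| = 2 ^ k)%N.
  by rewrite cardsC card_ffun card_bool card_ord.
have : (#|~: flip_hull| * 2 ^ #|D| <= #|~: flip_hull| * 16)%N.
  by rewrite leq_mul2l (@leq_pexp2l 2 _ 4) ?orbT.
move: hits card_cube; move: (#|~: _| * _)%N (2 ^ k)%N => q P; lia.
Qed.

Hypothesis coef_i_j0 : ~~ [|| coef i j0 == -1, coef i j0 == 0 | coef i j0 == 1].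

Lemma is01_row_flip x : is01 (row j0 x) -> ~~ is01 (row j0 (flip x i)).
Proof.
move=> x01; apply: contra coef_i_j0; rewrite wsum_flip.
case: (x i) => /(is01_addr x01) //.
by rewrite eqr_opp oppr_eq0 eqr_oppLR => /or3P[]->; rewrite ?orbT.
Qed.

Lemma flip_notin_preim x : x \in preim -> flip x i \notin preim.
Proof. by move=> /(preim_is01 j0)/is01_row_flip; apply: contra; exact: preim_is01. Qed.

Lemma mem_preim_of_hull x : is01 (row j0 x) -> x \in flip_hull -> x \in preim.
Proof.
move=> /is01_row_flip x01; rewrite mem_flip_hull => /orP[// | /(preim_is01 j0) flip01].
by move: x01; rewrite flip01.
Qed.

Lemma card_flip_hull : #|flip_hull| = (2 * #|preim|)%N.
Proof.
have -> : flip_hull = preim :|: (fun x => flip x i) @^-1: preim.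
  by apply/setP => x; rewrite mem_flip_hull !inE.
have disj : preim :&: (fun x => flip x i) @^-1: preim = set0.
  apply/setP => x; rewrite in_setI in_set0 [x \in _ @^-1: _]inE.
  by apply/negP => /andP[/flip_notin_preim/negP].
by rewrite cardsU disj cards0 subn0 card_preimset ?addnn ?mul2n //; exact: can_inj (flipK i).
Qed.

Lemma i_in_support : i \in support j0.
Proof. by rewrite inE; apply: contra coef_i_j0 => /eqP->; rewrite eqxx orbT. Qed.

Lemma hits_of_large_support (s : seq 'I_k) : uniq s -> (4 <= size s)%N ->
  {subset s <= support j0 :\ i} -> hits_all_subcubes [set d in s] (~: flip_hull).
Proof.
move=> s_uniq s_large s_supp x.
have w_s : {in s, forall d, (if d == i then 0 else coef d j0) != 0}.
  by move=> d /s_supp; rewrite !inE => /andP[/negPf-> nz].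
have [p [p_x p_incr]] := wsum_chain x s_uniq w_s.
have /existsP[n pn_out] : [exists n : 'I_(size s).+1, p n \notin flip_hull].
  apply: contraLR s_large => /existsPn p_in; rewrite -ltnNge.
  apply: (@increasing_chain_size _ _ (row_off_i \o p) _ [:: 0; 1; - coef i j0; 1 - coef i j0]).
    by move=> l /p_incr.
  move=> l l_le.
  by apply/row_off_i_hull/negbNE/(p_in (Ordinal (l_le : (l < (size s).+1)%N))).
by exists (p n); [move=> l; rewrite !inE => ls; apply: p_x | rewrite inE].
Qed.

Lemma hits_of_row_pair (j : 'I_m) (d1 d2 : 'I_k) : d1 != d2 ->
  coef d1 j != 0 -> coef d2 j != 0 -> coef d1 j0 = 0 -> coef d2 j0 = 0 ->
  hits_all_subcubes [set d1; d2] (~: flip_hull).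
Proof.
move=> d12 nz1 nz2 zero1 zero2.
apply: (hits_all_subcubesU1 (i := i)) => [y|x]; first by rewrite !in_setC mem_flip_hull_flip.
have [x_in|x_out] := boolP (x \in flip_hull); last by exists x; [move=> ? _ | rewrite in_setC].
pose z := if x \in preim then x else flip x i.
have z_preim : z \in preim.
  by rewrite /z; case: ifP => // /negbT; move: x_in; rewrite mem_flip_hull => /orP[->|].
have zx l : l != i -> z l = x l by rewrite /z; case: ifP => // _ /flip_other.
pose corners := [:: z; flip z d1; flip z d2; flip (flip z d1) d2].
have /hasP[u u_corner u_out] : has (fun u => u \notin flip_hull) corners.
  apply: contraT => /hasPn all_in.
  have row0_flip u d : coef d j0 = 0 -> row j0 (flip u d) = row j0 u.
    by move=> c0; rewrite wsum_flip c0 oppr0; case: (u d); rewrite addr0.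
  have corner_preim u : u \in corners -> u \in preim.
    move=> uc; apply: mem_preim_of_hull; last exact/negbNE/all_in.
    by move: uc; rewrite !inE => /or4P[]/eqP->; rewrite ?row0_flip //; apply: preim_is01.
  have a_nz (d : 'I_k) : coef d j != 0 -> (if z d then - coef d j else coef d j) != 0.
    by case: (z d); rewrite ?oppr_eq0.
  have corner_is01 u : u \in corners -> is01 (row j u).
    by move=> /corner_preim; apply: preim_is01.
  rewrite -(negbTE (is01_square (row j z) (a_nz _ nz1) (a_nz _ nz2))); apply/and4P; split.
  - by apply: corner_is01; rewrite inE eqxx.
  - by rewrite -wsum_flip; apply: corner_is01; rewrite !inE eqxx orbT.
  - by rewrite -wsum_flip; apply: corner_is01; rewrite !inE eqxx !orbT.
  - have := corner_is01 (flip (flip z d1) d2); rewrite !wsum_flip flip_other 1?eq_sym //.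
    by apply; rewrite !inE eqxx !orbT.
exists u; last by rewrite inE.
move=> l; rewrite !inE !negb_or => /and3P[li l1 l2].
by move: u_corner; rewrite !inE => /or4P[]/eqP->; rewrite ?flip_other ?zx.
Qed.

Lemma hits_of_outside_point (x0 : cube) (j : 'I_m) :
  ~~ is01 (row j0 x0) -> ~~ is01 (row j (flip x0 i)) ->
  hits_all_subcubes ((support j0 :|: support j) :\ i) (~: flip_hull).
Proof.
move=> out0 out; set S := support j0 :|: support j.
apply: (hits_all_subcubesU1 (i := i)) => [y|x]; first by rewrite !in_setC mem_flip_hull_flip.
exists [ffun l => if l \in S then x0 l else x l].
  rewrite setD1K ?in_setU ?i_in_support // => l.
  by rewrite inE ffunE => /negPf->.
set y := [ffun l => _]; have yS l : l \in S -> y l = x0 l by rewrite ffunE => ->.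
rewrite inE mem_flip_hull negb_or; apply/andP; split.
  apply: contra out0 => /(preim_is01 j0); rewrite (@eq_wsum _ _ _ y x0) // => l.
  by rewrite inE => nz; apply: yS; rewrite !inE nz.
apply: contra out => /(preim_is01 j); rewrite (@eq_wsum _ _ _ _ (flip x0 i)) // => l.
rewrite inE => nz; have lS : l \in S by rewrite !inE nz orbT.
have [->|li] := eqVneq l i; first by rewrite !flip_self yS // in_setU i_in_support.
by rewrite !flip_other // yS.
Qed.

Lemma card_flip_hull_small (x1 : cube) : x1 \notin flip_hull ->
  (16 * #|flip_hull| <= 15 * 2 ^ k)%N.
Proof.
move=> x1_out; set S0 := support j0 :\ i.
have [S0_large|S0_small] := leqP 4 #|S0|.
  have s_size : size (take 4 (enum S0)) = 4%N by rewrite size_takel // -cardE.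
  apply: (@card_flip_hull_le [set d in take 4 (enum S0)]).
    by rewrite cardsE -{2}s_size card_size.
  apply: hits_of_large_support; rewrite ?s_size ?take_uniq ?enum_uniq //.
  by move=> d /mem_take; rewrite mem_enum.
have [/existsP[j /card_gt1P[d1 [d2 [d1S d2S d12]]]]|pairs_small] :=
  boolP [exists j, (1 < #|support j :\: support j0|)%N].
  apply: (@card_flip_hull_le [set d1; d2]); first by rewrite cards2; case: (d1 != d2).
  move: d1S d2S; rewrite !inE => /andP[/negbNE/eqP z1 nz1] /andP[/negbNE/eqP z2 nz2].
  exact: hits_of_row_pair d12 nz1 nz2 z1 z2.
have [x0 [j [out0 out]]] : exists x0 j, ~~ is01 (row j0 x0) /\ ~~ is01 (row j (flip x0 i)).
  move: x1_out; rewrite mem_flip_hull negb_or => /andP[x1_out flip_out].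
  have [x1_01|x1_not01] := boolP (is01 (row j0 x1)).
    have [j x1_j] := notin_preim x1_out.
    by exists (flip x1 i), j; rewrite flipK is01_row_flip.
  by have [j flip_j] := notin_preim flip_out; exists x1, j.
apply: (@card_flip_hull_le ((support j0 :|: support j) :\ i));
  last exact: hits_of_outside_point out0 out.
have sub : (support j0 :|: support j) :\ i \subset S0 :|: (support j :\: support j0).
  by apply/subsetP => d; rewrite !inE; case: (d != i); case: (coef d j0 != 0).
apply: leq_trans (subset_leq_card sub) (leq_trans (leq_card_setU _ _) _).
by move/existsPn: pairs_small => /(_ j); rewrite -leqNgt; lia.
Qed.

End LinearPreimage.

Theorem lemma4p3 (R : realType) (k m : nat) (L : {linear 'cV[R]_k -> 'cV[R]_m}) :
  (tL L)%:R > 15 / 16 * (2 ^+ k / 2 : R) ->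
  ((tL L)%:R != (2 ^+ k / 2 : R)) ->
  forall i : 'I_k, forall j : 'I_m,
    [|| L (std_basis R i) j 0 == -1, L (std_basis R i) j 0 == 0 | L (std_basis R i) j 0 == 1].
Proof.
move=> t_large t_ne i j; apply/idPn => coef_ij.
have card_hull : #|flip_hull L i| = (2 * tL L)%N := card_flip_hull coef_ij.
case: (pickP (fun x => x \notin flip_hull L i)) => [x1 x1_out | hull_full].
  have := card_flip_hull_small coef_ij x1_out.
  rewrite card_hull mulnA -(ler_nat R) !natrM natrX.
  by move: t_large; lra.
have hull_T : flip_hull L i = setT.
  by apply/setP => x; rewrite in_setT; exact: negbFE (hull_full x).
have t_half : (2 * tL L)%:R = 2 ^+ k :> R.
  by rewrite -card_hull hull_T cardsT card_ffun card_bool card_ord natrX.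
by move: t_ne; rewrite -t_half natrM mulrC mulKf ?eqxx // pnatr_eq0.
Qed.
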